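(* Let $\alpha\geq\beta\geq\gamma$ be positive integers and let $$G=\Bigl\langle a,b\,\Bigm|\, a^{2^{\alpha}}=b^{2^{\beta}}=[a,b]^{2^{\gamma}}=[a,b,a]=[a,b,b]=e\Bigr\rangle.$$ Then $G$ is capable if and only if either $\alpha=\beta$, or $\alpha=\beta+1$ and $\gamma=\beta$.
   Context: A group $G$ is called capable if there exists a group $K$ such that $K/Z(K)\cong G$. Commutators are $[x,y]=x^{-1}y^{-1}xy$, left-normed: $[x,y,z]=[[x,y],z]$. *)

From mathcomp Require Import all_boot all_fingroup.
Set Implicit Arguments. Unset Strict Implicit. Unset Printing Implicit Defensive.

Record abs_group := AbsGroup {
  ag_carrier :> Type;
  ag_mul : ag_carrier -> ag_carrier -> ag_carrier;
  ag_inv : ag_carrier -> ag_carrier;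
  ag_one : ag_carrier;
  ag_mulA : forall x y z, ag_mul x (ag_mul y z) = ag_mul (ag_mul x y) z;
  ag_mul1 : forall x, ag_mul ag_one x = x;
  ag_mulV : forall x, ag_mul (ag_inv x) x = ag_one
}.

Definition ag_center (K : abs_group) (z : K) : Prop :=
  forall y : K, ag_mul z y = ag_mul y z.

(* K/Z(K) is isomorphic to G (a subgroup of a finGroupType):
   by the first isomorphism theorem, there is a homomorphism from K
   onto G whose kernel is exactly Z(K). *)
Definition central_quotient_iso (K : abs_group) (gT : finGroupType)
    (G : {set gT}) : Prop :=
  exists f : K -> gT,
    [/\ (forall x y : K, f (ag_mul x y) = (f x * f y)%g),
        (forall x : K, f x \in G),
        (forall g, g \in G -> exists x : K, f x = g) &
        (forall x : K, f x = 1%g <-> ag_center x)].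

Definition capable (gT : finGroupType) (G : {set gT}) : Prop :=
  exists K : abs_group, central_quotient_iso K G.

From mathcomp Require Import all_boot all_fingroup.
From HB Require Import structures.
From mathcomp Require Import all_solvable all_algebra.
From mathcomp Require Import ring zify.
From mathcomp Require Import boolp.
Set Implicit Arguments. Unset Strict Implicit. Unset Printing Implicit Defensive.

Import GRing.Theory Num.Theory.

(* Write c = [a, b].  The presented group G = <a, b> has class two, so its
   elements are the words a^i b^j c^k, multiplied by the rule
   a^i b^j c^k . a^i' b^j' c^k' = a^(i+i') b^(j+j') c^(k+k'-j i'); the same rule
   on Z/2^alpha x Z/2^beta x Z/2^gamma is a group satisfying the relations,
   so a, b, c have orders 2^alpha, 2^beta, 2^gamma and the words are unique.

   If G = K/Z(K), lift a, b to x, y in K and put z = [x, y].  Then [z, x],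
   [z, y], y^(2^beta) and z^(2^gamma) are central in K, and expanding
   [x^N, y] with the commutator calculus of class three shows that x^N is
   central for N = 2^(alpha-1), unless alpha = beta or alpha = beta+1 = gamma+1.
   Then a^N = 1, which is absurd.

   Conversely, let K be the free nilpotent group of class three on x, y,
   divided by a subgroup of <z, [z, x], [z, y]> described by a lattice of
   Z^3.  The map x |-> a, y |-> b is onto G, and its kernel is Z(K) as soon
   as a lattice condition singles out the multiples of the orders of a, b, c;
   in each capable case an explicit lattice does so. *)

Section IntegerPowers.
Variable gT : finGroupType.
Implicit Types (x y : gT) (z : int).
Local Open Scope group_scope.

Definition expgz x z : gT := x ^+ `|(z %% #[x])%Z|.

Lemma expgzE x z (m : nat) : (z = m %[mod #[x]])%Z -> expgz x z = x ^+ m.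
Proof.
move=> zm; rewrite /expgz -[x ^+ m]expg_mod_order; congr (x ^+ _).
apply/eqP; rewrite -eqz_nat -modz_nat -zm gez0_abs // modz_ge0 //.
by rewrite eqz_nat -lt0n order_gt0.
Qed.

Lemma expgz_nat x (m : nat) : expgz x m = x ^+ m.
Proof. exact: expgzE. Qed.

Lemma eq_expgz x z1 z2 : (z1 = z2 %[mod #[x]])%Z -> expgz x z1 = expgz x z2.
Proof. by rewrite /expgz => ->. Qed.

Lemma expgzD x z1 z2 : expgz x (z1 + z2) = expgz x z1 * expgz x z2.
Proof.
rewrite -expgD; apply: expgzE; rewrite PoszD !gez0_abs ?modz_ge0 //;
  by [rewrite modzDm | rewrite eqz_nat -lt0n order_gt0].
Qed.

Lemma expgz0 x : expgz x 0 = 1.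
Proof. exact: expgz_nat 0. Qed.

Lemma expgzN x z : expgz x (- z) = (expgz x z)^-1.
Proof. by apply/esym/mulg1_eq; rewrite -expgzD addrN expgz0. Qed.

Lemma expgz_eq1 x z : (expgz x z == 1) = (#[x]%:Z %| z)%Z.
Proof.
have o_gt0 : (#[x]%:Z != 0)%R by rewrite eqz_nat -lt0n order_gt0.
rewrite /expgz -order_dvdn -(absz_nat #[x]) -dvdzE gez0_abs ?modz_ge0 //.
by apply/dvdz_mod0P/dvdz_mod0P; rewrite modz_mod.
Qed.

Lemma commute_expgz x y z : commute x y -> commute (expgz x z) y.
Proof. by move=> cxy; apply/commute_sym/commuteX/commute_sym. Qed.

Lemma commute_expgz2 x y z1 z2 :
  commute x y -> commute (expgz x z1) (expgz y z2).
Proof. by move=> cxy; apply/commute_expgz/commute_sym/commute_expgz/commute_sym. Qed.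

Lemma expgz_ord x z : exists i : 'I_#[x], expgz x z = x ^+ i.
Proof.
have o_gt0 : (0 < #[x]%:Z)%R by rewrite ltz_nat order_gt0.
have lt_zx : `|(z %% #[x])%Z| < #[x].
  by rewrite -ltz_nat gez0_abs ?ltz_pmod ?modz_ge0 ?lt0r_neq0.
by exists (Ordinal lt_zx).
Qed.

End IntegerPowers.

Lemma modz_dvdm (d e z : int) : (d %| e)%Z -> ((z %% e)%Z = z %[mod d])%Z.
Proof. by case/dvdzP=> q ->; rewrite {2}(divz_eq z (q * d)) mulrA modzMDl. Qed.

Lemma leq_mul3_eq (x y z X Y Z : nat) : 0 < x -> 0 < y -> 0 < z ->
  x <= X -> y <= Y -> z <= Z -> X * Y * Z <= x * y * z -> [/\ x = X, y = Y & z = Z].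
Proof.
move=> x0 y0 z0 xX yY zZ le; have xy0 : 0 < x * y by rewrite muln_gt0 x0.
have e : x * y * z = X * Y * Z by apply/eqP; rewrite eqn_leq le !leq_mul.
split; apply/eqP; rewrite eqn_leq ?xX ?yY ?zZ /=.
- by rewrite -(leq_pmul2r y0) -(leq_pmul2r z0) e !leq_mul.
- by rewrite -(leq_pmul2l x0) -(leq_pmul2r z0) e !leq_mul.
- by rewrite -(leq_pmul2l xy0) e !leq_mul.
Qed.

Section ClassTwoWords.
Variables (gT : finGroupType) (a b : gT).
Local Notation c := [~ a, b]%g.
Hypotheses (cac : commute a c) (cbc : commute b c).
Local Open Scope group_scope.

Lemma order_commg_dvdl : #[c] %| #[a].
Proof. by rewrite order_dvdn -commXg // expg_order comm1g. Qed.

Lemma order_commg_dvdr : #[c] %| #[b].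
Proof. by rewrite order_dvdn -commgX // expg_order commg1. Qed.

Lemma expgz_commg n m :
  expgz b m * expgz a n = expgz a n * expgz b m * (expgz c (m * n)%R)^-1.
Proof.
rewrite {1 2}/expgz commgC -invg_comm commXXg //; congr (_ * _^-1).
apply/esym/expgzE; rewrite mulnC PoszM !gez0_abs ?modz_ge0
  ?eqz_nat -?lt0n ?order_gt0 //.
rewrite -[RHS]modzMm !modz_dvdm ?modzMm // dvdzE !absz_nat.
  exact: order_commg_dvdl.
exact: order_commg_dvdr.
Qed.

Definition abc (n m k : int) := expgz a n * expgz b m * expgz c k.

Lemma abc_mul n m k n' m' k' :
  abc n m k * abc n' m' k' = abc (n + n') (m + m') (k + k' - m * n').
Proof.
have cCa z n1 := commute_expgz2 z n1 (commute_sym cac).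
have cCb z m1 := commute_expgz2 z m1 (commute_sym cbc).
rewrite /abc !expgzD expgzN -!mulgA; congr (_ * _); rewrite !mulgA.
rewrite -(mulgA _ (expgz c k)) (cCa k n') mulgA expgz_commg -expgzN.
rewrite -(mulgA _ (expgz c (- (m * n'))) (expgz c k)) -expgzD.
rewrite -(mulgA _ _ (expgz b m')) cCb mulgA.
rewrite -!mulgA -!expgzD; do 3 congr (_ * _); congr (expgz _ _); ring.
Qed.

Lemma abc_nat (i j k : nat) : abc i j k = a ^+ i * b ^+ j * c ^+ k.
Proof. by rewrite /abc !expgz_nat. Qed.

Definition abc_set :=
  [set a ^+ t.1.1 * b ^+ t.1.2 * c ^+ t.2 | t : 'I_#[a] * 'I_#[b] * 'I_#[c]].

Lemma abc_setP g :
  reflect (exists i j k, g = a ^+ i * b ^+ j * c ^+ k) (g \in abc_set).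
Proof.
apply: (iffP imsetP) => [[t _ ->] | [i [j [k ->]]]]; first by exists t.1.1, t.1.2, t.2.
rewrite -abc_nat /abc; have [i' ->] := expgz_ord a i; have [j' ->] := expgz_ord b j.
by have [k' ->] := expgz_ord c k; exists (i', j', k').
Qed.

Lemma mem_abc_set n m k : abc n m k \in abc_set.
Proof.
rewrite /abc; have [i ->] := expgz_ord a n; have [j ->] := expgz_ord b m.
by have [k' ->] := expgz_ord c k; apply/abc_setP; exists i, j, k'.
Qed.

Lemma group_set_abc : group_set abc_set.
Proof.
apply/group_setP; split; first by apply/abc_setP; exists 0, 0, 0; rewrite !mulg1.
move=> _ _ /abc_setP[i [j [k ->]]] /abc_setP[i' [j' [k' ->]]].
by rewrite -!abc_nat abc_mul mem_abc_set.
Qed.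

Canonical abc_group := group group_set_abc.

Lemma abc_setE : abc_set = <[a]> <*> <[b]>.
Proof.
have aJ : a \in <[a]> <*> <[b]> by rewrite mem_gen // inE cycle_id.
have bJ : b \in <[a]> <*> <[b]> by rewrite mem_gen // inE cycle_id orbT.
apply/eqP; rewrite eqEsubset join_subG !cycle_subG; apply/and3P; split.
- by apply/subsetP=> _ /abc_setP[i [j [k ->]]]; rewrite !groupM ?groupX ?groupR.
- by apply/abc_setP; exists 1%N, 0%N, 0%N; rewrite !mulg1.
- by apply/abc_setP; exists 0%N, 1%N, 0%N; rewrite mul1g mulg1.
Qed.

Lemma card_joing_cycles : #|<[a]> <*> <[b]>| <= #[a] * #[b] * #[c].
Proof. by rewrite -abc_setE (leq_trans (leq_imset_card _ _)) // !card_prod !card_ord. Qed.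

Lemma orders_of_card (A B C : nat) :
    a ^+ A = 1 -> b ^+ B = 1 -> c ^+ C = 1 -> 0 < A -> 0 < B -> 0 < C ->
  A * B * C <= #|<[a]> <*> <[b]>| -> [/\ #[a] = A, #[b] = B & #[c] = C].
Proof.
move=> aA bB cC A_gt0 B_gt0 C_gt0 card_ge.
have /(dvdn_leq A_gt0) le_a : #[a] %| A by rewrite order_dvdn aA.
have /(dvdn_leq B_gt0) le_b : #[b] %| B by rewrite order_dvdn bB.
have /(dvdn_leq C_gt0) le_c : #[c] %| C by rewrite order_dvdn cC.
by apply: leq_mul3_eq; rewrite ?order_gt0 // (leq_trans card_ge card_joing_cycles).
Qed.

Lemma abc_eq1 n m k :
  #[a] * #[b] * #[c] <= #|<[a]> <*> <[b]>| ->
  (abc n m k == 1) = [&& (#[a]%:Z %| n)%Z, (#[b]%:Z %| m)%Z & (#[c]%:Z %| k)%Z].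
Proof.
move=> card_ge; rewrite -!expgz_eq1 /abc.
apply/eqP/and3P => [|[/eqP-> /eqP-> /eqP->]]; last by rewrite !mulg1.
have inj : {in predT &, injective
    (fun t : 'I_#[a] * 'I_#[b] * 'I_#[c] => a ^+ t.1.1 * b ^+ t.1.2 * c ^+ t.2)}.
  apply/imset_injP; rewrite eqn_leq leq_imset_card -[imset _ _]/abc_set abc_setE.
  by rewrite -[#|predT|]/#|{: ('I_#[a] * 'I_#[b] * 'I_#[c])%type}| !card_prod !card_ord.
have [i ->] := expgz_ord a n; have [j ->] := expgz_ord b m.
have [l ->] := expgz_ord c k; move=> abc1.
have := inj (i, j, l) (Ordinal (order_gt0 a), Ordinal (order_gt0 b), Ordinal (order_gt0 c)).
by rewrite !inE abc1 !mulg1 => /(_ isT isT erefl) [-> -> ->]; rewrite !eqxx.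
Qed.

End ClassTwoWords.

Section HallCoordinates.
Local Open Scope ring_scope.

Definition bin2z (z : int) : int := ((z * (z - 1)) %/ 2)%Z.

Lemma bin2zE z : bin2z z * 2 = z * (z - 1).
Proof.
rewrite /bin2z divzK //; have := divz_eq z 2.
have : 0 <= (z %% 2)%Z < 2 by rewrite modz_ge0 ?ltz_pmod.
move: (z %/ 2)%Z (z %% 2)%Z => q r /andP[r_ge0 r_lt2] ->.
have [->|->] : r = 0 \/ r = 1 by lia.
  by rewrite addr0 dvdz_mulr // dvdz_mull.
by rewrite addrK mulrC dvdz_mulr // dvdz_mull.
Qed.

Lemma bin2z_eq z y : z * (z - 1) = y * 2 -> bin2z z = y.
Proof. by move=> zy; apply: (mulIf (isT : (2 : int) != 0)); rewrite bin2zE. Qed.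

Lemma bin2zD z1 z2 : bin2z (z1 + z2) = bin2z z1 + bin2z z2 + z1 * z2.
Proof. by apply: bin2z_eq; rewrite !mulrDl !bin2zE; ring. Qed.

Lemma bin2zN z : bin2z (- z) = bin2z z + z.
Proof. by apply: bin2z_eq; rewrite mulrDl bin2zE; ring. Qed.

Lemma bin2z0 : bin2z 0 = 0. Proof. by apply: bin2z_eq; ring. Qed.
Lemma bin2z1 : bin2z 1 = 0. Proof. by apply: bin2z_eq; ring. Qed.

Lemma bin2z_mul2 z y : bin2z (2 * z * y) = z * y * (2 * z * y - 1).
Proof. by apply: bin2z_eq; ring. Qed.

(* Coordinates (n, m, k, p, q) of x^n y^m z^k w^p u^q in the free nilpotent
   group of class 3 on x and y, where z = [x, y], w = [z, x] and u = [z, y]. *)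
Definition hall := (int * int * int * int * int)%type.

Definition hall_mul (s t : hall) : hall :=
  let: (n, m, k, p, q) := s in let: (n', m', k', p', q') := t in
  (n + n', m + m', k + k' - m * n', p + p' + k * n' - m * bin2z n',
   q + q' - n' * bin2z m + (k - m * n') * m').

Definition hall_inv (s : hall) : hall :=
  let: (n, m, k, p, q) := s in let k' := - k - m * n in
  (- n, - m, k', - p - k' * n - m * bin2z n, - q + n * bin2z (- m) + k * m).

Lemma hall_mulA s t u : hall_mul (hall_mul s t) u = hall_mul s (hall_mul t u).
Proof.
case: s t u => [[[[n m] k] p] q] [[[[n' m'] k'] p'] q'] [[[[n'' m''] k''] p''] q''] /=.
by rewrite !bin2zD; congr (_, _, _, _, _); ring.
Qed.

Lemma hall_mul1 t : hall_mul (0, 0, 0, 0, 0) t = t.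
Proof. by case: t => [[[[n m] k] p] q] /=; rewrite bin2z0; congr (_, _, _, _, _); ring. Qed.

Lemma hall_mulV t : hall_mul (hall_inv t) t = (0, 0, 0, 0, 0).
Proof. by case: t => [[[[n m] k] p] q] /=; rewrite bin2zN; congr (_, _, _, _, _); ring. Qed.
End HallCoordinates.

Section LatticeQuotient.
Local Open Scope ring_scope.
Variables d1 e f d2 h d3 : int.
Hypotheses (d1_neq0 : d1 != 0) (d2_neq0 : d2 != 0).

(* (k, p, q) are exponents of z, w, u: the lattice describes a subgroup of <z, w, u>. *)
Definition in_lattice (k p q : int) : Prop :=
  exists a b c, [/\ k = a * d1, p = a * e + b * d2 & q = a * f + b * h + c * d3].

Lemma eq_in_lattice k p q k' p' q' :
  k = k' -> p = p' -> q = q' -> in_lattice k p q -> in_lattice k' p' q'.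
Proof. by move=> -> -> ->. Qed.

Lemma in_latticeD k p q k' p' q' :
  in_lattice k p q -> in_lattice k' p' q' -> in_lattice (k + k') (p + p') (q + q').
Proof.
move=> [a [b [c [-> -> ->]]]] [a' [b' [c' [-> -> ->]]]].
by exists (a + a'), (b + b'), (c + c'); split; ring.
Qed.

Lemma in_latticeZ z k p q : in_lattice k p q -> in_lattice (z * k) (z * p) (z * q).
Proof. by move=> [a [b [c [-> -> ->]]]]; exists (z * a), (z * b), (z * c); split; ring. Qed.

Lemma in_latticeN k p q : in_lattice k p q -> in_lattice (- k) (- p) (- q).
Proof. by move=> /(in_latticeZ (-1)); rewrite !mulN1r. Qed.

Lemma in_latticeB k p q k' p' q' :
  in_lattice k p q -> in_lattice k' p' q' -> in_lattice (k - k') (p - p') (q - q').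
Proof. by move=> L /in_latticeN; apply: in_latticeD. Qed.

Definition lattice_nf (k p q : int) : int * int * int :=
  let t1 := (k %/ d1)%Z in let p0 := p - t1 * e in let t2 := (p0 %/ d2)%Z in
  let q0 := q - t1 * f - t2 * h in ((k %% d1)%Z, (p0 %% d2)%Z, (q0 %% d3)%Z).
Arguments lattice_nf : simpl never.

Lemma lattice_nf_sub k p q k' p' q' :
  lattice_nf k p q = (k', p', q') -> in_lattice (k - k') (p - p') (q - q').
Proof.
rewrite /lattice_nf => -[<- <- <-].
move: (k %/ d1)%Z (k %% d1)%Z (divz_eq k d1) => t1 r1 E1.
move: ((p - t1 * e) %/ d2)%Z ((p - t1 * e) %% d2)%Z (divz_eq (p - t1 * e) d2) => t2 r2 E2.
move: ((q - t1 * f - t2 * h) %/ d3)%Z ((q - t1 * f - t2 * h) %% d3)%Z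
  (divz_eq (q - t1 * f - t2 * h) d3) => t3 r3 E3.
exists t1, t2, t3; split.
- by rewrite E1; ring.
- have -> : r2 = p - t1 * e - t2 * d2 by rewrite E2; ring.
  ring.
- have -> : r3 = q - t1 * f - t2 * h - t3 * d3 by rewrite E3; ring.
  ring.
Qed.

Lemma lattice_nf_eq k p q k' p' q' :
  lattice_nf k p q = lattice_nf k' p' q' <-> in_lattice (k - k') (p - p') (q - q').
Proof.
split=> [nf_eq | [a [b [c [Hk Hp Hq]]]]].
  case E: (lattice_nf k' p' q') nf_eq => [[k1 p1] q1] /lattice_nf_sub L.
  by have := in_latticeB L (lattice_nf_sub E); apply: eq_in_lattice; ring.
have -> : k = a * d1 + k' by rewrite -Hk; ring.
have -> : p = a * e + b * d2 + p' by rewrite -Hp; ring.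
have -> : q = a * f + b * h + c * d3 + q' by rewrite -Hq; ring.
rewrite /lattice_nf divzMDl // modzMDl.
set t1 := (k' %/ d1)%Z.
have -> : a * e + b * d2 + p' - (a + t1) * e = b * d2 + (p' - t1 * e) by ring.
rewrite divzMDl // modzMDl.
set t2 := ((p' - t1 * e) %/ d2)%Z.
have -> : a * f + b * h + c * d3 + q' - (a + t1) * f - (b + t2) * h =
          c * d3 + (q' - t1 * f - t2 * h) by ring.
by rewrite modzMDl.
Qed.

Hypotheses (normal_x : in_lattice 0 d1 0) (normal_y : in_lattice 0 0 d1).

(* The lattice is stable under conjugation by x and y, which send z to z w and z u. *)
Lemma in_lattice_conj dk dp dq x y :
  in_lattice dk dp dq -> in_lattice dk (dp + dk * x) (dq + dk * y).
Proof.
move=> L; have [a [_ [_ [Ek _ _]]]] := L.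
have := in_latticeD L (in_latticeD (in_latticeZ (a * x) normal_x) (in_latticeZ (a * y) normal_y)).
by apply: eq_in_lattice; rewrite Ek; ring.
Qed.

Definition hall_nf (v : hall) : hall :=
  let: (n, m, k, p, q) := v in let: (k', p', q') := lattice_nf k p q in (n, m, k', p', q').
Arguments hall_nf : simpl never.

Lemma eq_hall_nf n m k p q n' m' k' p' q' : n = n' -> m = m' ->
  in_lattice (k - k') (p - p') (q - q') -> hall_nf (n, m, k, p, q) = hall_nf (n', m', k', p', q').
Proof. by move=> -> -> /lattice_nf_eq E; rewrite /hall_nf E. Qed.

Lemma hall_nf_sub n m k p q : exists k' p' q',
  hall_nf (n, m, k, p, q) = (n, m, k', p', q') /\ in_lattice (k' - k) (p' - p) (q' - q).
Proof.
case E: (lattice_nf k p q) => [[k' p'] q']; exists k', p', q'; split; first by rewrite /hall_nf E.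
by move/lattice_nf_sub/in_latticeN: E; apply: eq_in_lattice; ring.
Qed.

Lemma hall_nf_id v : hall_nf (hall_nf v) = hall_nf v.
Proof.
case: v => [[[[n m] k] p] q]; have [k' [p' [q' [E L]]]] := hall_nf_sub n m k p q.
by rewrite E -[RHS]E; apply: eq_hall_nf.
Qed.

Lemma hall_nf_mull s t : hall_nf (hall_mul (hall_nf s) t) = hall_nf (hall_mul s t).
Proof.
case: s t => [[[[n m] k] p] q] [[[[n' m'] k'] p'] q'].
have [k1 [p1 [q1 [-> L]]]] := hall_nf_sub n m k p q.
by apply: eq_hall_nf => //=; move/(in_lattice_conj n' m'): L; apply: eq_in_lattice; ring.
Qed.

Lemma hall_nf_mulr s t : hall_nf (hall_mul s (hall_nf t)) = hall_nf (hall_mul s t).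
Proof.
case: s t => [[[[n m] k] p] q] [[[[n' m'] k'] p'] q'].
have [k1 [p1 [q1 [-> L]]]] := hall_nf_sub n' m' k' p' q'.
by apply: eq_hall_nf => //=; apply: eq_in_lattice L; ring.
Qed.

Definition hall_quo := {v : hall | hall_nf v == v}.

Lemma hall_nf_reduced v : hall_nf (hall_nf v) == hall_nf v.
Proof. by rewrite hall_nf_id. Qed.

Lemma hall_nf_gen n m : hall_nf (n, m, 0, 0, 0) == (n, m, 0, 0, 0).
Proof. by rewrite /hall_nf /lattice_nf !(div0z, mod0z, mul0r, subr0). Qed.

Definition qgen n m : hall_quo := exist _ (n, m, 0, 0, 0) (hall_nf_gen n m).
Definition qclass (v : hall) : hall_quo := exist _ (hall_nf v) (hall_nf_reduced v).
Definition qmul (s t : hall_quo) : hall_quo := qclass (hall_mul (val s) (val t)).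
Definition qinv (s : hall_quo) : hall_quo := qclass (hall_inv (val s)).
Definition qone : hall_quo := qgen 0 0.

Lemma qmulA s t u : qmul s (qmul t u) = qmul (qmul s t) u.
Proof. by apply: val_inj => /=; rewrite hall_nf_mull hall_nf_mulr hall_mulA. Qed.

Lemma qmul1 s : qmul qone s = s.
Proof.
case: s => v nf_v; apply: val_inj.
by rewrite -[val _]/(hall_nf (hall_mul (0, 0, 0, 0, 0) v)) hall_mul1; apply/eqP.
Qed.

Lemma qmulV s : qmul (qinv s) s = qone.
Proof. by apply: val_inj; rewrite /= hall_nf_mull hall_mulV; apply/eqP/hall_nf_gen. Qed.

Definition hall_quo_group : abs_group := AbsGroup qmulA qmul1 qmulV.

Lemma qmulC_lattice (s t : hall_quo) :
  let: (n, m, k, _, _) := val t in let: (n', m', k', _, _) := val s in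
  qmul t s = qmul s t <->
  in_lattice (m' * n - m * n') (k * n' - m * bin2z n' - k' * n + m' * bin2z n)
    (- n' * bin2z m + (k - m * n') * m' + n * bin2z m' - (k' - m' * n) * m).
Proof.
case: t s => [[[[[n m] k] p] q] ht] [[[[[n' m'] k'] p'] q'] hs] /=.
split=> [/(congr1 val) /= | L]; last by apply/val_inj/eq_hall_nf => //=; [ring | ring |
  apply: eq_in_lattice L; ring].
rewrite /hall_nf.
case E1: (lattice_nf _ _ _) => [[k1 p1] q1]; case E2: (lattice_nf _ _ _) => [[k2 p2] q2].
case=> _ _ e1 e2 e3; move: E1; rewrite e1 e2 e3 -E2 => /lattice_nf_eq.
by apply: eq_in_lattice; ring.
Qed.

(* The coordinates by which x^n y^m z^k fails to commute with x and with y. *)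
Definition central_coords (n m k : int) : Prop :=
  in_lattice (- m) k (- bin2z m) /\ in_lattice n (bin2z n) (k + n * m).

Lemma qcentralP (t : hall_quo) :
  (forall s, qmul t s = qmul s t) <-> let: (n, m, k, _, _) := val t in central_coords n m k.
Proof.
case: t => [[[[[n m] k] p] q] ht] /=; set t : hall_quo := exist _ (n, m, k, p, q) ht.
have /= Cx := qmulC_lattice (qgen 1 0) t; have /= Cy := qmulC_lattice (qgen 0 1) t.
split=> [C | [Lm Ln] s].
  by split; [move/Cx: (C (qgen 1 0)) | move/Cy: (C (qgen 0 1))];
    apply: eq_in_lattice; rewrite ?bin2z0 ?bin2z1; ring.
have [a [_ [_ [Ea _ _]]]] := Lm; have [a' [_ [_ [Ea' _ _]]]] := Ln.
have Lm2 : in_lattice 0 m 0 by move/(in_latticeZ (- a)): normal_x; apply: eq_in_lattice; lia.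
have Lm3 : in_lattice 0 0 m by move/(in_latticeZ (- a)): normal_y; apply: eq_in_lattice; lia.
have Ln2 : in_lattice 0 n 0 by move/(in_latticeZ a'): normal_x; apply: eq_in_lattice; lia.
have Ln3 : in_lattice 0 0 n by move/(in_latticeZ a'): normal_y; apply: eq_in_lattice; lia.
have := qmulC_lattice s t; case: s => [[[[[n' m'] k'] p'] q'] hs] /= ->.
have := in_latticeD (in_latticeZ n' Lm) (in_latticeD (in_latticeZ m' Ln)
  (in_latticeD (in_latticeZ (- k') (in_latticeD Ln2 Lm3)) (in_latticeD
  (in_latticeZ (- bin2z n') Lm2) (in_latticeD (in_latticeZ (bin2z m') Ln3)
  (in_latticeZ (- (m' * n')) Lm3))))).
by apply: eq_in_lattice; ring.
Qed.

End LatticeQuotient.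

(* One lattice for each capable case: alpha = beta > gamma, alpha = beta = gamma
   and alpha = beta + 1 = gamma + 1. *)
Section CentralLattices.
Local Open Scope ring_scope.
Variable H : int.
Hypothesis H_gt0 : 0 < H.

Lemma central_coords_2Cr_2Cr_C (C r : int) : H = C * r -> forall n m k,
  central_coords (2 * H) 0 0 C 0 C n m k <->
  [/\ (2 * H %| n)%Z, (2 * H %| m)%Z & (C %| k)%Z].
Proof.
move=> -> n m k; split=> [[[a [b [c [Em Ek _]]]] [a' [_ [_ [En _ _]]]]] | ].
  by split; apply/dvdzP;
    [exists a'; rewrite En | exists (- a); rewrite -[m]opprK Em | exists b; rewrite Ek]; ring.
case=> /dvdzP[i ->] /dvdzP[j ->] /dvdzP[l ->].
rewrite /central_coords -!(mulrC (2 * _)) !bin2z_mul2.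
split; [exists (- j), l, (- r * j * (2 * (C * r) * j - 1)) |
        exists i, (r * i * (2 * (C * r) * i - 1)), (l + 4 * (C * r) * r * i * j)];
  split; ring.
Qed.

Lemma central_coords_2H_2H_2H n m k :
  central_coords (2 * H) H 0 H H (2 * H) n m k <->
  [/\ (2 * H %| n)%Z, (2 * H %| m)%Z & (2 * H %| k)%Z].
Proof.
split=> [[[a [b [c [Em Ek Eq]]]] [a' [_ [_ [En _ _]]]]] | ].
  have Em' : m = 2 * H * - a by rewrite -[m]opprK Em; ring.
  rewrite Em' bin2z_mul2 in Eq.
  have Eb : b = - a * (2 * H * a + 1) - 2 * c.
    apply: (mulfI (lt0r_neq0 H_gt0)).
    have -> : H * b = - (H * - a * (2 * H * - a - 1)) - c * (2 * H) by rewrite Eq; ring.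
    ring.
  by split; apply/dvdzP; [exists a'; rewrite En | exists (- a); rewrite Em' |
    exists (- H * a * a - c); rewrite Ek Eb]; ring.
case=> /dvdzP[i ->] /dvdzP[j ->] /dvdzP[l ->].
rewrite /central_coords -!(mulrC (2 * H)) !bin2z_mul2.
split; [exists (- j), (2 * l + j), (- H * j * j - l) |
        exists i, (2 * H * i * i - 2 * i), (l + 2 * H * i * j - H * i * i + i)];
  split; ring.
Qed.

Lemma central_coords_4H_2H_2H n m k :
  central_coords (2 * H) 0 H (2 * H) 0 (2 * H) n m k <->
  [/\ (4 * H %| n)%Z, (2 * H %| m)%Z & (2 * H %| k)%Z].
Proof.
split=> [[[a [b [c [Em Ek _]]]] [a' [b' [_ [En Ep _]]]]] | ].
  have En' : n = 2 * H * a' by rewrite En; ring.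
  rewrite En' bin2z_mul2 in Ep.
  have Ea : a' = 2 * H * a' * a' - 2 * b'.
    apply: (mulfI (lt0r_neq0 H_gt0)).
    have -> : H * a' = 2 * H * a' * a' * H - H * a' * (2 * H * a' - 1) by ring.
    by rewrite Ep; ring.
  split; apply/dvdzP; [exists (H * a' * a' - b'); rewrite En' {1}Ea |
    exists (- a); rewrite -[m]opprK Em | exists b; rewrite Ek]; ring.
case=> /dvdzP[i ->] /dvdzP[j ->] /dvdzP[l ->].
have -> : i * (4 * H) = 2 * H * (2 * i) by ring.
rewrite /central_coords -!(mulrC (2 * H)) !bin2z_mul2.
split; [exists (- j), l, (- H * j * j + j) |
        exists (2 * i), (i * (4 * H * i - 1)), (l + 4 * H * i * j - i)];
  split; ring.
Qed.
End CentralLattices.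

Section CapabilityCriterion.
Variables (gT : finGroupType) (a b : gT).
Local Notation c := [~ a, b]%g.
Local Notation abc := (abc a b).
Hypotheses (cac : commute a c) (cbc : commute b c).
Hypothesis card_ge : (#[a] * #[b] * #[c] <= #|<[a]> <*> <[b]>|)%g.
Variables d1 e f d2 h d3 : int.
Hypotheses (d1_neq0 : d1 != 0%R) (d2_neq0 : d2 != 0%R).
Hypothesis dvd_c_d1 : (#[c]%g%:Z %| d1)%Z.
Hypothesis central_coordsP : forall n m k,
  central_coords d1 e f d2 h d3 n m k <->
  [/\ (#[a]%g%:Z %| n)%Z, (#[b]%g%:Z %| m)%Z & (#[c]%g%:Z %| k)%Z].

Lemma lattice_normal : in_lattice d1 e f d2 h d3 0 d1 0 /\ in_lattice d1 e f d2 h d3 0 0 d1.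
Proof.
have [] := (central_coordsP 0 0 d1).2; rewrite ?dvdz0 //.
by rewrite /central_coords !(oppr0, bin2z0, mul0r, addr0).
Qed.

Let K := hall_quo_group d1_neq0 d2_neq0 lattice_normal.1 lattice_normal.2.

Definition hall_abc (v : hall) : gT := let: (n, m, k, _, _) := v in abc n m k.

Lemma hall_abc_nf v : hall_abc (hall_nf d1 e f d2 h d3 v) = hall_abc v.
Proof.
case: v => [[[[n m] k] p] q].
have [k' [p' [q' [-> [z [_ [_ [Ek _ _]]]]]]]] := hall_nf_sub d1 e f d2 h d3 n m k p q.
congr (_ * _)%g; apply/eq_expgz/eqP; rewrite eqz_mod_dvd Ek.
exact: dvdz_mull.
Qed.

Lemma hall_abc_mul s t : hall_abc (hall_mul s t) = (hall_abc s * hall_abc t)%g.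
Proof.
case: s t => [[[[n m] k] p] q] [[[[n' m'] k'] p'] q'].
by rewrite /= abc_mul.
Qed.

Lemma capable_of_lattice : capable (<[a]> <*> <[b]>)%g.
Proof.
exists K, (fun t => hall_abc (val t)); split.
- by move=> s t; rewrite /= hall_abc_nf hall_abc_mul.
- by move=> [[[[[n m] k] p] q] ?]; rewrite -abc_setE ?mem_abc_set.
- move=> g; rewrite -abc_setE // => /abc_setP[i [j [k ->]]]; rewrite -abc_nat.
  exists (qclass e f h d3 d1_neq0 d2_neq0 (Posz i, Posz j, Posz k, 0%R, 0%R)).
  exact: hall_abc_nf.
move=> t; have := qcentralP d1_neq0 d2_neq0 lattice_normal.1 lattice_normal.2 t.
case: t => [[[[[n m] k] p] q] ht] /= centralP.
split=> [/eqP | /centralP /central_coordsP [? ? ?]];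
  last by apply/eqP; rewrite abc_eq1 //; apply/and3P.
by rewrite abc_eq1 // => /and3P [? ? ?]; apply/centralP/central_coordsP.
Qed.
End CapabilityCriterion.

Section ClassThreePowers.
Local Open Scope group_scope.
Variables (gT : groupType).
Implicit Types x y z w : gT.

Lemma conjgE_comm x y : x ^ y = x * [~ x, y].
Proof. by rewrite commgEl mulKVg. Qed.

Lemma expMg_conj x z w : (forall g, commute w g) -> z ^ x = z * w ->
  forall n, (x * z) ^+ n = x ^+ n * z ^+ n * w ^+ 'C(n, 2).
Proof.
move=> wZ zx n.
have wnZ g m : commute (w ^+ m) g by apply/commute_sym/commuteX/commute_sym.
have zxn m : z ^+ m * x = x * (z ^+ m * w ^+ m).
  by rewrite [LHS]conjgC conjXg zx expgMn //; apply/commute_sym.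
elim: n => [|n IH]; first by rewrite !expg0 !mulg1.
rewrite expgSr IH !mulgA -(mulgA _ (w ^+ _) x) (wnZ x) mulgA.
rewrite -(mulgA (x ^+ n) (z ^+ n) x) zxn !mulgA.
rewrite -(mulgA _ (w ^+ 'C(n, 2)) z) (wnZ z) mulgA.
rewrite -(mulgA _ (w ^+ n) z) (wnZ z) mulgA.
have -> : 'C(n.+1, 2) = n + 'C(n, 2) by rewrite binS bin1 addnC.
by rewrite expgnDr -expgSr !mulgA -(mulgA _ _ z) -expgSr.
Qed.

Variables x y : gT.
Local Notation z := [~ x, y].
Local Notation w := [~ z, x].
Local Notation u := [~ z, y].
Hypotheses (wZ : forall g, commute w g) (uZ : forall g, commute u g).

Lemma conj_expg_r m : x ^ (y ^+ m) = x * z ^+ m * u ^+ 'C(m, 2).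
Proof.
have cuy : u ^ y = u by rewrite conjgE uZ mulKg.
elim: m => [|m IH]; first by rewrite !expg0 conjg1 !mulg1.
rewrite expgSr conjgM IH !conjMg !conjXg cuy !conjgE_comm.
rewrite expgMn; last exact/commute_sym.
have -> : 'C(m.+1, 2) = m + 'C(m, 2) by rewrite binS bin1 addnC.
by rewrite expgnDr expgS !mulgA.
Qed.

Lemma expg_central_comm n : (forall g, commute (z ^+ n) g) -> w ^+ n = 1 /\ u ^+ n = 1.
Proof.
move=> znZ; split; apply/(mulgI (z ^+ n)); rewrite mulg1 -expgMn;
  by [rewrite -conjgE_comm -conjXg conjgE znZ mulKg | apply/commute_sym].
Qed.

Lemma commute_expg_l (M P N t : nat) :
    (forall g, commute (y ^+ M) g) -> (forall g, commute (z ^+ P) g) ->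
  N = (M * t)%N -> P %| t * 'C(M, 2) -> P %| 'C(N, 2) -> commute (x ^+ N) y.
Proof.
move=> yMZ zPZ -> /dvdnP[q1 E1] /dvdnP[q2 E2].
have [wP uP] := expg_central_comm zPZ.
have zMu : z ^+ M = (u ^+ 'C(M, 2))^-1.
  apply/eqP; rewrite -mulg_eq1; apply/eqP/(mulgI x).
  by rewrite mulgA -conj_expg_r conjgE -yMZ mulKg mulg1.
apply/commgP/conjg_fixP; rewrite conjXg conjgE_comm (expMg_conj wZ (conjgE_comm _ _)).
have zN : z ^+ (M * t) = 1.
  by rewrite expgnA zMu expVgn -expgnA mulnC E1 mulnC expgnA uP expg1n invg1.
have wN : w ^+ 'C(M * t, 2) = 1 by rewrite E2 mulnC expgnA wP expg1n.
by rewrite zN wN !mulg1.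
Qed.
End ClassThreePowers.

(* Abstract groups come without decidable equality; classical logic supplies
   one, which makes them groupTypes. *)
Definition abs_carrier (K : abs_group) : Type := ag_carrier K.
HB.instance Definition _ (K : abs_group) := gen_eqMixin (abs_carrier K).
HB.instance Definition _ (K : abs_group) := gen_choiceMixin (abs_carrier K).

Section AbsGroupType.
Variable K : abs_group.
Implicit Types x : abs_carrier K.

Lemma ag_mulgV x : ag_mul x (ag_inv x) = ag_one K.
Proof.
rewrite -[ag_mul x _]ag_mul1 -{1}(ag_mulV (ag_inv x)) -ag_mulA.
by rewrite (ag_mulA (ag_inv x) x) ag_mulV ag_mul1 ag_mulV.
Qed.

Lemma ag_mulg1 x : ag_mul x (ag_one K) = x.
Proof. by rewrite -(ag_mulV x) ag_mulA ag_mulgV ag_mul1. Qed.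

HB.instance Definition _ :=
  isGroup.Build (abs_carrier K) (@ag_mulA K) (@ag_mul1 K) ag_mulg1 (@ag_mulV K) ag_mulgV.
End AbsGroupType.

Section CentralQuotientPowers.
Local Open Scope group_scope.
Variables (K : abs_group) (gT : finGroupType) (f : abs_carrier K -> gT).
Hypothesis fM : {morph f : x y / x * y}.
Hypothesis f_ker : forall x, f x = 1 <-> ag_center x.

Lemma abs_morph1 : f 1 = 1.
Proof. by apply: (mulgI (f 1)); rewrite -fM !mulg1. Qed.

HB.instance Definition _ := isUMagmaMorphism.Build _ _ f (abs_morph1, fM).

Variables (a b : gT).
Local Notation c := [~ a, b].
Hypotheses (cac : commute a c) (cbc : commute b c).
Hypothesis f_into : forall x, f x \in <[a]> <*> <[b]>.
Hypothesis f_onto : forall g, g \in <[a]> <*> <[b]> -> exists x, f x = g.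

Lemma central_quotient_expg_eq1 (N t : nat) :
  N = (#[b] * t)%N -> #[c] %| t * 'C(#[b], 2) -> #[c] %| 'C(N, 2) -> a ^+ N = 1.
Proof.
move=> def_N dv_t dv_N.
have central g : f g = 1 -> forall h, commute g h by move/f_ker.
have [x fx] : exists x, f x = a by apply/f_onto; rewrite mem_gen // inE cycle_id.
have [y fy] : exists y, f y = b by apply/f_onto; rewrite mem_gen // inE cycle_id orbT.
have fz : f [~ x, y] = c by rewrite gmulfR /= fx fy.
have cxNy : commute (x ^+ N) y.
  apply: (commute_expg_l _ _ _ _ def_N dv_t dv_N) => g; apply: central.
  - by rewrite !gmulfR /= fx fy; apply/eqP/commgP/commute_sym.
  - by rewrite !gmulfR /= fx fy; apply/eqP/commgP/commute_sym.
  - by rewrite gmulfXn /= fy expg_order.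
  - by rewrite gmulfXn /= fz expg_order.
have cxNx : commute (x ^+ N) x by apply/commute_sym/commuteX/commute_refl.
have cxNz : commute (x ^+ N) [~ x, y].
  by rewrite /commg /conjg; do ! apply: commuteM; do ? apply: commuteV.
have cxN g : commute (x ^+ N) g.
  have /abc_setP[i [j [k fg]]] : f g \in abc_set a b by rewrite abc_setE.
  pose h := x ^+ i * y ^+ j * [~ x, y] ^+ k.
  have fh : f h = f g by rewrite fg !gmulfM !gmulfXn /= fx fy fz.
  have /central ch : f (h^-1 * g) = 1 by rewrite gmulfM gmulfV /= fh mulVg.
  rewrite -(mulKVg h g); apply: commuteM (commute_sym (ch _)).
  by do ! apply: commuteM; apply: commuteX.
have /f_ker fxN1 : ag_center (x ^+ N) by move=> g; apply: cxN.
by rewrite -fx -gmulfXn.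
Qed.
End CentralQuotientPowers.

Lemma capable_expg_eq1 (gT : finGroupType) (a b : gT) (N t : nat) :
    commute a [~ a, b]%g -> commute b [~ a, b]%g -> capable (<[a]> <*> <[b]>)%g ->
    N = #[b]%g * t -> #[[~ a, b]]%g %| t * 'C(#[b]%g, 2) -> #[[~ a, b]]%g %| 'C(N, 2) ->
  (a ^+ N = 1)%g.
Proof.
move=> cac cbc [K [f [fM f_into f_onto f_ker]]].
exact: (central_quotient_expg_eq1 fM f_ker cac cbc f_into f_onto).
Qed.

(* Moduli C > 1 dividing A and B, parametrised so that no 'Z_n degenerates to Z/2. *)
Section TwistedProduct.
Local Open Scope ring_scope.
Variables c r s : nat.
Local Notation C := c.+2.
Local Notation A := (C * r.+1).
Local Notation B := (C * s.+1).

Definition castC (m : nat) : 'Z_C := m%:R.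

Lemma castC_mod m n : (C %| n)%N -> castC (m %% n) = castC m.
Proof. by move=> dvd_Cn; apply: val_inj; rewrite /castC /= !Zp_nat /= modn_dvdm. Qed.

Lemma castCD p : (1 < p)%N -> (C %| p)%N ->
  forall i j : 'Z_p, castC (i + j)%R = castC i + castC j.
Proof.
move=> p_gt1 dvd_Cp i j; change (castC ((i + j) %% (Zp_trunc p).+2) = castC i + castC j).
by rewrite castC_mod ?Zp_cast // /castC natrD.
Qed.

Lemma castCN p : (1 < p)%N -> (C %| p)%N -> forall i : 'Z_p, castC (- i)%R = - castC i.
Proof. by move=> p_gt1 dvd_Cp i; apply/eqP; rewrite -addr_eq0 -castCD // addNr. Qed.

Lemma castC0 p : castC (0%R : 'Z_p) = 0. Proof. by []. Qed.

Lemma castC1 p : (1 < p)%N -> (C %| p)%N -> castC (1%R : 'Z_p) = 1.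
Proof. by move=> p_gt1 dvd_Cp; rewrite /= castC_mod ?Zp_cast. Qed.

Lemma natr_Zp_self p : (1 < p)%N -> p%:R = 0 :> 'Z_p.
Proof. by move=> p_gt1; apply: val_inj; rewrite /= Zp_nat /= Zp_cast ?modnn. Qed.

Lemma A_gt1 : (1 < A)%N. Proof. by rewrite (@leq_trans C) // leq_pmulr. Qed.
Lemma B_gt1 : (1 < B)%N. Proof. by rewrite (@leq_trans C) // leq_pmulr. Qed.
Lemma C_dvdA : (C %| A)%N. Proof. exact: dvdn_mulr. Qed.
Lemma C_dvdB : (C %| B)%N. Proof. exact: dvdn_mulr. Qed.

Local Notation castE := (castCD A_gt1 C_dvdA, castCD B_gt1 C_dvdB,
  castCN A_gt1 C_dvdA, castCN B_gt1 C_dvdB).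

Definition twisted := ('Z_A * 'Z_B * 'Z_C)%type.

(* (i, j, k) stands for a^i b^j c^k, as in abc_mul. *)
Definition tw_mul (x y : twisted) : twisted :=
  let: (i, j, k) := x in let: (i', j', k') := y in
  (i + i', j + j', k + k' - castC j * castC i').
Definition tw_one : twisted := (0, 0, 0).
Definition tw_inv (x : twisted) : twisted :=
  let: (i, j, k) := x in (- i, - j, - k - castC j * castC i).

Lemma tw_mulA : associative tw_mul.
Proof.
move=> [[i j] k] [[i' j'] k'] [[i'' j''] k''] /=; rewrite !castE.
by congr (_, _, _); ring.
Qed.

Lemma tw_mul1 : left_id tw_one tw_mul.
Proof. by move=> [[i j] k] /=; congr (_, _, _); ring. Qed.

Lemma tw_mulV : left_inverse tw_one tw_inv tw_mul.
Proof. by move=> [[i j] k] /=; rewrite !castE; congr (_, _, _); ring. Qed.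

HB.instance Definition _ := Finite.on twisted.
HB.instance Definition _ := Finite_isGroup.Build twisted tw_mulA tw_mul1 tw_mulV.

Local Open Scope group_scope.

Lemma tw_mulE i j k i' j' k' : ((i, j, k) : twisted) * (i', j', k') =
  (i + i', j + j', k + k' - castC j * castC i')%R.
Proof. by []. Qed.

Lemma tw_invE i j k : ((i, j, k) : twisted)^-1 = (- i, - j, - k - castC j * castC i)%R.
Proof. by []. Qed.

Definition tw_a : twisted := (1, 0, 0)%R.
Definition tw_b : twisted := (0, 1, 0)%R.

Lemma tw_aX n : tw_a ^+ n = (n%:R, 0, 0)%R.
Proof.
elim: n => [|n IH] //; rewrite expgS IH tw_mulE.
by rewrite /castC mul0r subr0 !addr0 -natr1 addrC.
Qed.

Lemma tw_bX n : tw_b ^+ n = (0, n%:R, 0)%R.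
Proof.
elim: n => [|n IH] //; rewrite expgS IH tw_mulE.
by rewrite /castC mulr0 subr0 !addr0 -natr1 addrC.
Qed.

Lemma tw_comm : [~ tw_a, tw_b] = (0, 0, 1)%R.
Proof.
rewrite /commg /conjg !tw_invE !tw_mulE !castE !castC1 ?A_gt1 ?B_gt1 ?C_dvdA ?C_dvdB //.
by rewrite !castC0; congr (_, _, _); ring.
Qed.

Lemma tw_commX n : [~ tw_a, tw_b] ^+ n = (0, 0, n%:R)%R.
Proof.
rewrite tw_comm; elim: n => [|n IH] //; rewrite expgS IH tw_mulE castC0.
by rewrite mulr0 subr0 nat1r !addr0.
Qed.

Lemma twisted_homg :
  [set: twisted] \homg Grp (a : b : (a ^+ A, b ^+ B, [~ a, b] ^+ C, [~ a, b, a], [~ a, b, b])).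
Proof.
apply/existsP; exists (tw_a, tw_b); rewrite /= 5!xpair_eqE /=.
have aJ : tw_a \in <[tw_a]> <*> <[tw_b]> by rewrite mem_gen // inE cycle_id.
have bJ : tw_b \in <[tw_a]> <*> <[tw_b]> by rewrite mem_gen // inE cycle_id orbT.
apply/and5P; split.
- rewrite eqEsubset subsetT; apply/subsetP => -[[i j] k] _.
  have -> : ((i, j, k) : twisted) = tw_a ^+ i * tw_b ^+ j * [~ tw_a, tw_b] ^+ k.
    rewrite tw_aX tw_bX tw_commX !tw_mulE !castC0 !natr_Zp.
    by congr (_, _, _); ring.
  by rewrite !groupM ?groupX ?groupR.
- by rewrite tw_aX natr_Zp_self ?A_gt1.
- by rewrite tw_bX natr_Zp_self ?B_gt1.
- by rewrite tw_commX natr_Zp_self.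
rewrite tw_comm /tw_a /tw_b /commg /conjg !tw_invE !tw_mulE !castE.
rewrite !castC1 ?A_gt1 ?B_gt1 ?C_dvdA ?C_dvdB //.
by rewrite !castC0; apply/andP; split; apply/eqP; congr (_, _, _); ring.
Qed.
End TwistedProduct.

Lemma card_twisted c r s : #|[set: twisted c r s]| = (c.+2 * r.+1 * (c.+2 * s.+1) * c.+2)%N.
Proof. by rewrite cardsT !card_prod !card_ord !Zp_cast ?A_gt1 ?B_gt1. Qed.

Lemma isog_Grp_card (A B C : nat) (gT : finGroupType) (G : {group gT}) :
    (1 < C)%N -> (0 < A)%N -> (0 < B)%N -> (C %| A)%N -> (C %| B)%N ->
    (G \isog Grp (a : b : (a ^+ A, b ^+ B, [~ a, b] ^+ C, [~ a, b, a], [~ a, b, b])))%g ->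
  (A * B * C <= #|G|)%N.
Proof.
move=> C_gt1 A_gt0 B_gt0 /dvdnP[r' def_A] /dvdnP[s' def_B] isoG.
have [c def_C] : exists c, C = c.+2 by exists C.-2; lia.
have [r def_r] : exists r, r' = r.+1 by exists r'.-1; lia.
have [s def_s] : exists s, s' = s.+1 by exists s'.-1; lia.
rewrite mulnC in def_A; rewrite mulnC in def_B; subst.
have := twisted_homg c r s; rewrite -isoG => /card_homg/dvdn_leq.
by rewrite card_twisted; apply.
Qed.

Lemma bin2_exp2 k : 'C(2 ^ k.+1, 2) = 2 ^ k * (2 ^ k.+1).-1.
Proof. by rewrite bin2 expnS -mulnA mul2n doubleK. Qed.

Lemma Posz_exp2S k : Posz (2 ^ k.+1) = (2 * Posz (2 ^ k))%R.
Proof. by rewrite expnS PoszM. Qed.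

Lemma Posz_exp2_neq0 k : Posz (2 ^ k) != 0%R.
Proof. by rewrite -[0%R]/(Posz 0) eqz_nat expn_eq0. Qed.

Section TwoGeneratedTwoGroups.
Variables (gT : finGroupType) (a b : gT) (alpha beta gamma : nat).
Local Notation c := [~ a, b]%g.
Hypotheses (cac : commute a c) (cbc : commute b c).
Hypotheses (oa : #[a]%g = 2 ^ alpha) (ob : #[b]%g = 2 ^ beta) (oc : #[c]%g = 2 ^ gamma).
Hypothesis card_ge : #[a]%g * #[b]%g * #[c]%g <= #|(<[a]> <*> <[b]>)%g|.
Hypotheses (gamma_gt0 : 0 < gamma) (le_gamma_beta : gamma <= beta).

Lemma capable_eq_exponents : alpha = beta -> capable (<[a]> <*> <[b]>)%g.
Proof.
move=> eq_ab; have [b' def_beta] : exists b', beta = b'.+1 by exists beta.-1; lia.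
have [lt_gb | eq_gb] : gamma < beta \/ gamma = beta by lia.
- apply: (@capable_of_lattice _ a b cac cbc card_ge
    (Posz (2 ^ beta)) 0 0 (Posz (2 ^ gamma)) 0 (Posz (2 ^ gamma))).
  + exact: Posz_exp2_neq0.
  + exact: Posz_exp2_neq0.
  + by rewrite oc dvdzE !absz_nat dvdn_exp2l.
  move=> n m k; rewrite oa ob oc eq_ab def_beta Posz_exp2S.
  apply: (central_coords_2Cr_2Cr_C _ (r := Posz (2 ^ (b' - gamma)))).
  by rewrite -PoszM -expnD subnKC //; lia.
apply: (@capable_of_lattice _ a b cac cbc card_ge (Posz (2 ^ beta)) (Posz (2 ^ b'))
  0 (Posz (2 ^ b')) (Posz (2 ^ b')) (Posz (2 ^ beta))).
- exact: Posz_exp2_neq0.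
- exact: Posz_exp2_neq0.
- by rewrite oc eq_gb.
move=> n m k; rewrite oa ob oc eq_ab eq_gb def_beta Posz_exp2S.
by apply: central_coords_2H_2H_2H; rewrite ltz_nat expn_gt0.
Qed.

Lemma capable_succ_exponent : alpha = beta.+1 -> gamma = beta -> capable (<[a]> <*> <[b]>)%g.
Proof.
move=> eq_ab eq_gb; have [b' def_beta] : exists b', beta = b'.+1 by exists beta.-1; lia.
apply: (@capable_of_lattice _ a b cac cbc card_ge (Posz (2 ^ beta)) 0 (Posz (2 ^ b'))
  (Posz (2 ^ beta)) 0 (Posz (2 ^ beta))).
- exact: Posz_exp2_neq0.
- exact: Posz_exp2_neq0.
- by rewrite oc eq_gb.
move=> n m k; rewrite oa ob oc eq_ab eq_gb def_beta !Posz_exp2S mulrA.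
by apply: central_coords_4H_2H_2H; rewrite ltz_nat expn_gt0.
Qed.

Lemma exponents_of_capable : beta <= alpha -> capable (<[a]> <*> <[b]>)%g ->
  alpha = beta \/ (alpha = beta.+1 /\ gamma = beta).
Proof.
move=> le_ba cap; have [-> | ne_ab] := eqVneq alpha beta; first by left.
have [? | le_g2a] : alpha = beta.+1 /\ gamma = beta \/ gamma.+2 <= alpha by lia.
  by right.
have [a' def_alpha] : exists a', alpha = a'.+2 by exists alpha.-2; lia.
have [b' def_beta] : exists b', beta = b'.+1 by exists beta.-1; lia.
have := capable_expg_eq1 (t := 2 ^ (a'.+1 - beta)) cac cbc cap.
move/(_ (2 ^ a'.+1)); rewrite ob oc -expnD subnKC; last by lia.
rewrite {2}def_beta !bin2_exp2 mulnA -expnD !dvdn_mulr ?dvdn_exp2l; try lia.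
move=> /(_ erefl isT isT) /eqP; rewrite -order_dvdn oa def_alpha dvdn_Pexp2l //.
by rewrite ltnn.
Qed.
End TwoGeneratedTwoGroups.

Theorem corollary5p6 (alpha beta gamma : nat)
  (hg : 0 < gamma) (hgb : gamma <= beta) (hba : beta <= alpha)
  (gT : finGroupType) (G : {group gT}) :
  (G \isog Grp (a : b : (a ^+ (2 ^ alpha), b ^+ (2 ^ beta),
                         [~ a, b] ^+ (2 ^ gamma), [~ a, b, a], [~ a, b, b])))%g ->
  (capable G <-> alpha = beta \/ (alpha = beta.+1 /\ gamma = beta)).
Proof.
move=> isoG; have card_G : 2 ^ alpha * 2 ^ beta * 2 ^ gamma <= #|G|.
  apply: isog_Grp_card (isoG); rewrite ?expn_gt0 ?dvdn_exp2l ?(leq_trans hgb hba) //.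
  by rewrite -[1]/(2 ^ 0) ltn_exp2l.
case/existsP: (isoGrp_hom isoG) => -[a b] /=; rewrite !xpair_eqE /=.
case/and5P=> /eqP defG /eqP aA /eqP bB /eqP cC /andP[/eqP cac /eqP cbc].
have {}cac : commute a [~ a, b]%g by apply/commute_sym/commgP/eqP.
have {}cbc : commute b [~ a, b]%g by apply/commute_sym/commgP/eqP.
rewrite -defG in card_G *.
have [oa ob oc] := orders_of_card cac cbc aA bB cC (expn_gt0 _ _) (expn_gt0 _ _)
  (expn_gt0 _ _) card_G.
have card_ge : #[a]%g * #[b]%g * #[[~ a, b]]%g <= #|(<[a]> <*> <[b]>)%g|.
  by rewrite oa ob oc.
split=> [cap | [eq_ab | [eq_ab eq_gb]]].
- exact: (exponents_of_capable cac cbc oa ob oc).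
- exact: (capable_eq_exponents cac cbc oa ob oc card_ge).
- exact: (capable_succ_exponent cac cbc oa ob oc card_ge).
Qed.
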